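(* Let $I\subseteq\mathbb{N}$ and let $(\mathcal{G}_N)_{N\in I}$ be a sequence of symmetric connected graphs with $\mathcal{G}_N=(\mathcal{V}_N,\mathcal{E}_N)$ and $|\mathcal{V}_N|=N$, with maximum degree $\deg_{\max}(N)$ and spectral gap $\lambda_1(N)$. Fix $q\in(0,1)$. If $\deg_{\max}(N)^2/\lambda_1(N)=o(N)$ as $N\to+\infty$, then the BGA with mixing parameter $q$ is asymptotically unbiased on this sequence, i.e. $\lim_{N\to+\infty}\mathbb{E}[\beta(\infty)]=0$, where $\mathbb{E}[\beta(\infty)]$ is computed for the BGA run on $\mathcal{G}_N$.
   Context: Graph and neighborhoods: for a graph $\mathcal{G}=(\mathcal{V},\mathcal{E})$ with $\mathcal{E}\subset\mathcal{V}\times\mathcal{V}$ and $N=|\mathcal{V}|$, the out-neighborhood of $v$ is $\mathcal{N}^+_v=\{u\in\mathcal{V}:(u,v)\in\mathcal{E}\}$ and the in-neighborhood is $\mathcal{N}^-_v=\{u\in\mathcal{V}:(v,u)\in\mathcal{E}\}$; $\deg^\pm_v=|\mathcal{N}^\pm_v|$, $\deg_{\max}=\max_v\max\{\deg^+_v,\deg^-_v\}$. The graph is symmetric if $\mathcal{N}^+_v=\mathcal{N}^-_v$ for all $v$. The spectral gap $\lambda_1$ is the smallest nonzero eigenvalue (in modulus) of the Laplacian matrix. BGA: given initial values $x_v(0)\in[0,L]$ and a mixing parameter $q\in(0,1)$, at each time $t\in\mathbb{Z}_{\ge0}$ one node $v$ is sampled uniformly at random from $\mathcal{V}$ (independently over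 time); every $u\in\mathcal{N}^+_v$ updates $x_u(t+1)=(1-q)x_u(t)+q\,x_v(t)$, and every $u\notin\mathcal{N}^+_v$ keeps $x_u(t+1)=x_u(t)$. Notation: $x_{\mathrm{ave}}(t)=N^{-1}\sum_v x_v(t)$, $\beta(t)=|x_{\mathrm{ave}}(t)-x_{\mathrm{ave}}(0)|^2$, $\mathbb{E}[\beta(\infty)]:=\lim_{t\to\infty}\mathbb{E}[\beta(t)]$. The BGA is asymptotically unbiased if $\lim_{N\to+\infty}\mathbb{E}[\beta(\infty)]=0$. *)

From Stdlib Require Import Reals Lra List Relations.
Import ListNotations.
Open Scope R_scope.

(* A graph on N vertices is given by N and an edge relation E : nat -> nat -> bool;
   the vertex set is {0,...,N-1} and the edge set is
   {(u,v) | u < N, v < N, E u v = true}.  Values of E outside this range are ignored. *)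

Definition vsum (N : nat) (f : nat -> R) : R :=
  fold_right Rplus 0 (map f (seq 0 N)).

Definition out_nbhd (N : nat) (E : nat -> nat -> bool) (v : nat) : list nat :=
  filter (fun u => E u v) (seq 0 N).
Definition in_nbhd (N : nat) (E : nat -> nat -> bool) (v : nat) : list nat :=
  filter (fun u => E v u) (seq 0 N).

Definition deg_out N E v : nat := length (out_nbhd N E v).
Definition deg_in N E v : nat := length (in_nbhd N E v).

Definition deg_max (N : nat) (E : nat -> nat -> bool) : nat :=
  fold_right Nat.max 0%nat (map (fun v => Nat.max (deg_out N E v) (deg_in N E v)) (seq 0 N)).

Definition symmetric_graph (N : nat) (E : nat -> nat -> bool) : Prop :=
  forall v, (v < N)%nat -> out_nbhd N E v = in_nbhd N E v.

Definition edge_rel (N : nat) (E : nat -> nat -> bool) : relation nat :=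
  fun u v => (u < N)%nat /\ (v < N)%nat /\ E u v = true.

Definition connected_graph (N : nat) (E : nat -> nat -> bool) : Prop :=
  forall u v, (u < N)%nat -> (v < N)%nat -> clos_refl_trans nat (edge_rel N E) u v.

Definition laplacian_apply (N : nat) (E : nat -> nat -> bool) (x : nat -> R) (v : nat) : R :=
  INR (deg_out N E v) * x v - vsum N (fun u => if E u v then x u else 0).

Definition is_laplacian_eigenvalue (N : nat) (E : nat -> nat -> bool) (mu : R) : Prop :=
  exists x : nat -> R,
    (exists v, (v < N)%nat /\ x v <> 0) /\
    (forall v, (v < N)%nat -> laplacian_apply N E x v = mu * x v).

(* spectral gap: smallest modulus of a nonzero eigenvalue of the Laplacian
   (the Laplacian of a symmetric graph is a real symmetric matrix, so all its
   eigenvalues are real and admit real eigenvectors) *)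
Definition is_spectral_gap (N : nat) (E : nat -> nat -> bool) (g : R) : Prop :=
  (exists mu, is_laplacian_eigenvalue N E mu /\ mu <> 0 /\ Rabs mu = g) /\
  (forall mu, is_laplacian_eigenvalue N E mu -> mu <> 0 -> g <= Rabs mu).

Definition bga_step (E : nat -> nat -> bool) (q : R) (v : nat) (x : nat -> R) : nat -> R :=
  fun u => if E u v then (1 - q) * x u + q * x v else x u.

(* E[f(x(t))] for the BGA started from x, with node sampled uniformly
   and independently among {0,...,N-1} at each time *)
Fixpoint bga_expect (N : nat) (E : nat -> nat -> bool) (q : R) (t : nat)
    (x : nat -> R) (f : (nat -> R) -> R) : R :=
  match t with
  | O => f x
  | S t' => / INR N * vsum N (fun v => bga_expect N E q t' (bga_step E q v x) f)
  end.

Definition x_ave (N : nat) (x : nat -> R) : R := / INR N * vsum N x.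

Definition E_beta (N : nat) (E : nat -> nat -> bool) (q : R) (x0 : nat -> R) (t : nat) : R :=
  bga_expect N E q t x0 (fun x => (x_ave N x - x_ave N x0) ^ 2).

From Stdlib Require Import Reals Lra Lia List Classical ClassicalEpsilon.
Open Scope R_scope.

(* When node v broadcasts, the sum of the values changes by q Δ_v(x), where
   Δ_v(x) = Σ_{u ~ v} (x_v - x_u); on a symmetric graph Σ_v Δ_v(x) = 0, so the
   average is a martingale and E[β(t)] is nondecreasing.  Its one-step increment
   (q/N)^2 E_v[Δ_v^2] is at most (q/N)^2 d_max D(x)/N by Cauchy-Schwarz, D being
   the Dirichlet form, while the energy Σ_u x_u^2 drops in expectation by exactly
   q (1-q) D(x)/N.  Hence β + q d_max / ((1-q) N^2) Σ_u x_u^2 is a supermartingale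
   and E[β(∞)] <= q d_max L^2 / ((1-q) N).  Finally every Laplacian eigenvalue
   satisfies |λ| <= 2 d_max (Gershgorin), so d_max <= 2 d_max^2 / λ_1 = o(N). *)

Lemma vsum_S N f : vsum (S N) f = vsum N f + f N.
Proof.
  unfold vsum. rewrite seq_S, map_app, fold_right_app. simpl.
  induction (map f (seq 0 N)) as [|a l IH]; simpl; [ring | rewrite IH; ring].
Qed.

Lemma vsum_ext N f g : (forall i, (i < N)%nat -> f i = g i) -> vsum N f = vsum N g.
Proof. induction N; intros H; [reflexivity|]. rewrite !vsum_S, IHN, H; auto; lia. Qed.

Lemma vsum_plus N f g : vsum N (fun i => f i + g i) = vsum N f + vsum N g.
Proof. induction N; [unfold vsum; simpl; ring|]. rewrite !vsum_S, IHN; ring. Qed.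

Lemma vsum_scal N c f : vsum N (fun i => c * f i) = c * vsum N f.
Proof. induction N; [unfold vsum; simpl; ring|]. rewrite !vsum_S, IHN; ring. Qed.

Lemma vsum_const N c : vsum N (fun _ => c) = INR N * c.
Proof. induction N; [unfold vsum; simpl; ring|]. rewrite !vsum_S, IHN, S_INR; ring. Qed.

Lemma vsum_le N f g : (forall i, (i < N)%nat -> f i <= g i) -> vsum N f <= vsum N g.
Proof.
  induction N; intros H; [unfold vsum; simpl; lra|]. rewrite !vsum_S.
  apply Rplus_le_compat; [apply IHN; intros i Hi|]; apply H; lia.
Qed.

Lemma vsum_nonneg N f : (forall i, (i < N)%nat -> 0 <= f i) -> 0 <= vsum N f.
Proof. intros H. rewrite <- (Rmult_0_r (INR N)), <- vsum_const. now apply vsum_le. Qed.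

Lemma vsum_Rabs_le N f : Rabs (vsum N f) <= vsum N (fun i => Rabs (f i)).
Proof.
  induction N; [unfold vsum; simpl; rewrite Rabs_R0; lra|]. rewrite !vsum_S.
  eapply Rle_trans; [apply Rabs_triang | lra].
Qed.

Lemma vsum_length_filter p N : INR (length (filter p (seq 0 N))) = vsum N (fun u => if p u then 1 else 0).
Proof.
  induction N; [reflexivity|].
  rewrite seq_S, filter_app, length_app, plus_INR, IHN, vsum_S.
  simpl. destruct (p N); simpl; ring.
Qed.

Lemma vsum2_ext N F G : (forall u v, (u < N)%nat -> (v < N)%nat -> F u v = G u v) ->
  vsum N (fun v => vsum N (fun u => F u v)) = vsum N (fun v => vsum N (fun u => G u v)).
Proof. intros H. apply vsum_ext; intros v Hv; apply vsum_ext; auto. Qed.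

Lemma vsum2_plus N F G : vsum N (fun v => vsum N (fun u => F u v + G u v)) =
  vsum N (fun v => vsum N (fun u => F u v)) + vsum N (fun v => vsum N (fun u => G u v)).
Proof. rewrite <- vsum_plus. apply vsum_ext; intros; apply vsum_plus. Qed.

Lemma vsum2_scal N c F : vsum N (fun v => vsum N (fun u => c * F u v)) =
  c * vsum N (fun v => vsum N (fun u => F u v)).
Proof. rewrite <- vsum_scal. apply vsum_ext; intros; apply vsum_scal. Qed.

Lemma vsum_comm N F : vsum N (fun v => vsum N (fun u => F u v)) = vsum N (fun u => vsum N (fun v => F u v)).
Proof.
  induction N; [reflexivity|].
  rewrite (vsum_S N (fun v => vsum (S N) (fun u => F u v))), (vsum_S N (fun u => vsum (S N) (fun v => F u v))).
  rewrite (vsum_ext N (fun v => vsum (S N) (fun u => F u v)) (fun v => vsum N (fun u => F u v) + F N v))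
    by (intros; rewrite vsum_S; reflexivity).
  rewrite (vsum_ext N (fun u => vsum (S N) (fun v => F u v)) (fun u => vsum N (fun v => F u v) + F u N))
    by (intros; rewrite vsum_S; reflexivity).
  rewrite !vsum_plus, IHN, !vsum_S.
  change (vsum N (F N)) with (vsum N (fun v => F N v)). ring.
Qed.

Lemma Cauchy_Schwarz_step A W Q w a : A ^ 2 <= W * Q -> 0 <= W -> 0 <= Q -> 0 <= w ->
  (A + w * a) ^ 2 <= (W + w) * (Q + w * a ^ 2).
Proof.
  intros H HW HQ Hw.
  assert (Hdisc : 0 <= W * a ^ 2 + Q - 2 * a * A).
  { destruct (Req_dec W 0) as [->|HW0].
    - assert (A = 0) by nra. subst. nra.
    - assert (0 <= W * (W * a ^ 2 + Q - 2 * a * A)) by (pose proof (pow2_ge_0 (W * a - A)); nra).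
      apply (Rmult_le_reg_l W); lra. }
  nra.
Qed.

Lemma vsum_Cauchy_Schwarz N w a : (forall i, (i < N)%nat -> 0 <= w i) ->
  vsum N (fun i => w i * a i) ^ 2 <= vsum N w * vsum N (fun i => w i * a i ^ 2).
Proof.
  induction N; intros H; [unfold vsum; simpl; lra|]. rewrite !vsum_S.
  assert (Hw : forall i, (i < N)%nat -> 0 <= w i) by (intros; apply H; lia).
  apply Cauchy_Schwarz_step; auto.
  - apply vsum_nonneg; auto.
  - apply vsum_nonneg; intros i Hi. pose proof (Hw i Hi). pose proof (pow2_ge_0 (a i)). nra.
Qed.

Definition edge_ind (e : nat -> nat -> bool) u v : R := if e u v then 1 else 0.

Definition symmetric_edges (N : nat) (e : nat -> nat -> bool) :=
  forall u v, (u < N)%nat -> (v < N)%nat -> e u v = e v u.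

Lemma edge_ind_nonneg e u v : 0 <= edge_ind e u v.
Proof. unfold edge_ind; destruct (e u v); lra. Qed.

Lemma deg_out_vsum N e v : INR (deg_out N e v) = vsum N (fun u => edge_ind e u v).
Proof. apply vsum_length_filter. Qed.

Lemma symmetric_graph_edges N e : symmetric_graph N e -> symmetric_edges N e.
Proof.
  intros H u v Hu Hv. specialize (H v Hv). unfold out_nbhd, in_nbhd in H.
  assert (Hiff : In u (filter (fun u => e u v) (seq 0 N)) <-> In u (filter (fun u => e v u) (seq 0 N)))
    by (rewrite H; tauto).
  rewrite !filter_In, in_seq in Hiff.
  destruct (e u v), (e v u); auto; [symmetry|]; apply Hiff; split; auto; lia.
Qed.

Lemma fold_max_ge (h : nat -> nat) l a : In a l -> (h a <= fold_right Nat.max 0 (map h l))%nat.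
Proof. induction l; simpl; [tauto|]. intros [->|H]; [lia|]. specialize (IHl H). lia. Qed.

Lemma deg_out_le_deg_max N e v : (v < N)%nat -> (deg_out N e v <= deg_max N e)%nat.
Proof.
  intros Hv. unfold deg_max.
  assert (Hin : In v (seq 0 N)) by (apply in_seq; lia).
  pose proof (fold_max_ge (fun v => Nat.max (deg_out N e v) (deg_in N e v)) _ _ Hin) as H.
  cbv beta in H. lia.
Qed.

Lemma exists_Rabs_argmax (x : nat -> R) N : (0 < N)%nat ->
  exists v, (v < N)%nat /\ forall u, (u < N)%nat -> Rabs (x u) <= Rabs (x v).
Proof.
  induction N as [|N IH]; intros HN; [lia|].
  destruct (Nat.eq_dec N 0) as [->|HN0].
  - exists 0%nat. split; [lia|]. intros u Hu. replace u with 0%nat by lia. lra.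
  - destruct IH as [v [Hv Hmax]]; [lia|].
    destruct (Rle_dec (Rabs (x v)) (Rabs (x N))).
    + exists N. split; [lia|]. intros u Hu.
      destruct (Nat.eq_dec u N) as [->|]; [lra|]. specialize (Hmax u ltac:(lia)). lra.
    + exists v. split; [lia|]. intros u Hu.
      destruct (Nat.eq_dec u N) as [->|]; [lra|]. apply Hmax; lia.
Qed.

(* Gershgorin: look at a coordinate of maximal modulus of an eigenvector. *)
Lemma laplacian_eigenvalue_Rabs_le N e mu :
  is_laplacian_eigenvalue N e mu -> Rabs mu <= 2 * INR (deg_max N e).
Proof.
  intros [x [[w [Hw Hxw]] Hx]].
  destruct (exists_Rabs_argmax x N ltac:(lia)) as [v [Hv Hmax]].
  assert (Hxv : 0 < Rabs (x v)) by (pose proof (Hmax w Hw); pose proof (Rabs_pos_lt _ Hxw); lra).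
  assert (Hnbr : Rabs (vsum N (fun u => if e u v then x u else 0)) <= INR (deg_out N e v) * Rabs (x v)).
  { eapply Rle_trans; [apply vsum_Rabs_le|]. rewrite deg_out_vsum, Rmult_comm, <- vsum_scal.
    apply vsum_le; intros u Hu. unfold edge_ind. specialize (Hmax u Hu).
    destruct (e u v); [lra | rewrite Rabs_R0; lra]. }
  assert (Hmu : Rabs mu * Rabs (x v) <= 2 * INR (deg_out N e v) * Rabs (x v)).
  { rewrite <- Rabs_mult, <- (Hx v Hv). unfold laplacian_apply.
    eapply Rle_trans; [apply Rabs_triang|]. rewrite Rabs_Ropp, Rabs_mult, Rabs_pos_eq by apply pos_INR.
    lra. }
  pose proof (le_INR _ _ (deg_out_le_deg_max N e v Hv)).
  assert (Rabs mu <= 2 * INR (deg_out N e v)) by (apply (Rmult_le_reg_r (Rabs (x v))); lra).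
  lra.
Qed.

Lemma deg_max_le_sq_div_gap N e g : is_spectral_gap N e g ->
  INR (deg_max N e) <= 2 * (INR (deg_max N e) ^ 2 / g).
Proof.
  intros [[mu [Hmu [Hmu0 <-]]] _].
  pose proof (laplacian_eigenvalue_Rabs_le N e mu Hmu).
  pose proof (Rabs_pos_lt mu Hmu0). pose proof (pos_INR (deg_max N e)).
  set (d := INR (deg_max N e)) in *. set (g := Rabs mu) in *.
  replace (2 * (d ^ 2 / g)) with (d * (2 * d) / g) by (field; lra).
  apply Rmult_le_reg_r with g; [lra|]. unfold Rdiv. rewrite Rmult_assoc, Rinv_l by lra. nra.
Qed.

Definition drift N e (y : nat -> R) v := vsum N (fun u => edge_ind e u v * (y v - y u)).

Definition dirichlet N e (y : nat -> R) :=
  vsum N (fun v => vsum N (fun u => edge_ind e u v * (y v - y u) ^ 2)).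

Definition energy N (y : nat -> R) := vsum N (fun u => y u ^ 2).

Definition step_mean N e q (f : (nat -> R) -> R) y :=
  / INR N * vsum N (fun v => f (bga_step e q v y)).

Lemma bga_step_edge_ind e q v y u : bga_step e q v y u = y u + edge_ind e u v * (q * (y v - y u)).
Proof. unfold bga_step, edge_ind; destruct (e u v); ring. Qed.

Lemma vsum_bga_step N e q v y : vsum N (bga_step e q v y) = vsum N y + q * drift N e y v.
Proof.
  rewrite (vsum_ext N _ _ (fun u _ => bga_step_edge_ind e q v y u)), vsum_plus.
  unfold drift. rewrite <- vsum_scal. f_equal. apply vsum_ext; intros; ring.
Qed.

Lemma x_ave_bga_step N e q v y : (0 < N)%nat ->
  x_ave N (bga_step e q v y) = x_ave N y + q / INR N * drift N e y v.
Proof. intros HN. unfold x_ave. rewrite vsum_bga_step. field. apply not_0_INR; lia. Qed.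

Section SymmetricGraph.

Variables (N : nat) (e : nat -> nat -> bool).
Hypothesis He : symmetric_edges N e.

Lemma vsum2_edge_swap F :
  vsum N (fun v => vsum N (fun u => edge_ind e u v * F u v)) =
  vsum N (fun v => vsum N (fun u => edge_ind e u v * F v u)).
Proof.
  rewrite vsum_comm. apply vsum2_ext; intros u v Hu Hv. unfold edge_ind. now rewrite (He v u).
Qed.

(* Every edge is counted once with each sign. *)
Lemma vsum_drift y : vsum N (drift N e y) = 0.
Proof.
  unfold drift.
  assert (Hanti : vsum N (fun v => vsum N (fun u => edge_ind e u v * (y v - y u))) =
                  -1 * vsum N (fun v => vsum N (fun u => edge_ind e u v * (y v - y u)))).
  { rewrite vsum2_edge_swap at 1. rewrite <- vsum2_scal. apply vsum2_ext; intros; ring. }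
  lra.
Qed.

Lemma vsum_energy_bga_step q y :
  vsum N (fun v => energy N (bga_step e q v y)) = INR N * energy N y - q * (1 - q) * dirichlet N e y.
Proof.
  unfold energy, dirichlet.
  rewrite (vsum2_ext N (fun u v => bga_step e q v y u ^ 2)
     (fun u v => y u ^ 2 + (2 * q * (edge_ind e u v * (y u * (y v - y u)))
                          + q ^ 2 * (edge_ind e u v * (y v - y u) ^ 2))))
    by (intros; unfold bga_step, edge_ind; destruct (e u v); ring).
  rewrite vsum2_plus, vsum_const, vsum2_plus, !vsum2_scal.
  (* symmetrising the cross term turns it into minus half the Dirichlet form *)
  assert (Hcross : 2 * vsum N (fun v => vsum N (fun u => edge_ind e u v * (y u * (y v - y u)))) =
                   -1 * vsum N (fun v => vsum N (fun u => edge_ind e u v * (y v - y u) ^ 2))).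
  { set (T := vsum N (fun v => vsum N (fun u => edge_ind e u v * (y u * (y v - y u))))).
    replace (2 * T) with (T + T) by ring. unfold T at 2. rewrite vsum2_edge_swap.
    unfold T. rewrite <- vsum2_plus, <- vsum2_scal. apply vsum2_ext; intros; ring. }
  rewrite (Rmult_comm 2 q), Rmult_assoc, Hcross. ring.
Qed.

Lemma step_mean_ave_sq q c y : (0 < N)%nat ->
  step_mean N e q (fun z => (x_ave N z - c) ^ 2) y =
  (x_ave N y - c) ^ 2 + (q / INR N) ^ 2 * / INR N * vsum N (fun v => drift N e y v ^ 2).
Proof.
  intros HN. unfold step_mean.
  rewrite (vsum_ext N _ (fun v => (x_ave N y - c) ^ 2 + (2 * (x_ave N y - c) * (q / INR N) * drift N e y v
                                  + (q / INR N) ^ 2 * drift N e y v ^ 2)))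
    by (intros; rewrite x_ave_bga_step by auto; ring).
  rewrite vsum_plus, vsum_const, vsum_plus, !vsum_scal, vsum_drift.
  field. apply not_0_INR; lia.
Qed.

End SymmetricGraph.

Lemma vsum_drift_sq_le N e y dm : (forall v, (v < N)%nat -> (deg_out N e v <= dm)%nat) ->
  vsum N (fun v => drift N e y v ^ 2) <= INR dm * dirichlet N e y.
Proof.
  intros Hd. unfold dirichlet. rewrite <- vsum_scal. apply vsum_le; intros v Hv.
  eapply Rle_trans; [apply (vsum_Cauchy_Schwarz N (fun u => edge_ind e u v) (fun u => y v - y u));
                     intros; apply edge_ind_nonneg|].
  rewrite <- deg_out_vsum. apply Rmult_le_compat_r.
  - apply vsum_nonneg; intros u _.
    pose proof (edge_ind_nonneg e u v). pose proof (pow2_ge_0 (y v - y u)). nra.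
  - apply le_INR; auto.
Qed.

Lemma bga_expect_S N e q t x f :
  bga_expect N e q (S t) x f = step_mean N e q (fun z => bga_expect N e q t z f) x.
Proof. reflexivity. Qed.

Section Expectation.

Variables (N : nat) (e : nat -> nat -> bool) (q : R).
Hypothesis HN : (0 < N)%nat.

Lemma step_mean_le f g y : (forall z, f z <= g z) -> step_mean N e q f y <= step_mean N e q g y.
Proof.
  intros H. unfold step_mean. apply Rmult_le_compat_l.
  - left. apply Rinv_0_lt_compat, lt_0_INR, HN.
  - apply vsum_le; auto.
Qed.

Lemma bga_expect_le t f g x : (forall z, f z <= g z) -> bga_expect N e q t x f <= bga_expect N e q t x g.
Proof.
  revert x. induction t as [|t IH]; intros x H; [apply H|].
  rewrite !bga_expect_S. apply step_mean_le; auto.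
Qed.

Lemma bga_expect_superharmonic f : (forall y, step_mean N e q f y <= f y) ->
  forall t x, bga_expect N e q t x f <= f x.
Proof.
  intros Hf t. induction t as [|t IH]; intros x; [apply Rle_refl|].
  rewrite bga_expect_S. eapply Rle_trans; [apply step_mean_le, IH | apply Hf].
Qed.

Lemma bga_expect_subharmonic f : (forall y, f y <= step_mean N e q f y) ->
  forall t x, bga_expect N e q t x f <= bga_expect N e q (S t) x f.
Proof.
  intros Hf t. induction t as [|t IH]; intros x; [apply Hf|].
  rewrite (bga_expect_S N e q (S t)), bga_expect_S. apply step_mean_le, IH.
Qed.

End Expectation.

Definition lyapunov N K c (y : nat -> R) := (x_ave N y - c) ^ 2 + K * energy N y.

Lemma energy_nonneg N y : 0 <= energy N y.
Proof. apply vsum_nonneg; intros; apply pow2_ge_0. Qed.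

Section Lyapunov.

Variables (N : nat) (e : nat -> nat -> bool) (q : R) (dm : nat).
Hypotheses (HN : (0 < N)%nat) (He : symmetric_edges N e) (Hq : 0 < q < 1)
  (Hdm : forall v, (v < N)%nat -> (deg_out N e v <= dm)%nat).

(* Chosen so that the energy loss q (1 - q) K D(y) / N pays for the variance bound of the average. *)
Let K := q * INR dm / ((1 - q) * INR N ^ 2).

Lemma lyapunov_weight_nonneg : 0 <= K.
Proof.
  pose proof (lt_0_INR N HN). pose proof (pos_INR dm).
  unfold K. apply Rmult_le_pos; [nra|]. left.
  apply Rinv_0_lt_compat, Rmult_lt_0_compat; [lra | apply pow_lt; lra].
Qed.

Lemma lyapunov_superharmonic c y : step_mean N e q (lyapunov N K c) y <= lyapunov N K c y.
Proof.
  pose proof (lt_0_INR N HN) as HNr.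
  assert (Hsplit : step_mean N e q (lyapunov N K c) y =
                   step_mean N e q (fun z => (x_ave N z - c) ^ 2) y
                   + K * (/ INR N * vsum N (fun v => energy N (bga_step e q v y)))).
  { unfold step_mean, lyapunov. rewrite vsum_plus, vsum_scal. ring. }
  rewrite Hsplit, step_mean_ave_sq, vsum_energy_bga_step by auto.
  assert (HK : K * (q * (1 - q)) = (q / INR N) ^ 2 * INR dm) by (unfold K; field; lra).
  assert (Hdrift : (q / INR N) ^ 2 * vsum N (fun v => drift N e y v ^ 2)
                   <= K * (q * (1 - q)) * dirichlet N e y).
  { rewrite HK, Rmult_assoc. apply Rmult_le_compat_l; [apply pow2_ge_0|].
    now apply vsum_drift_sq_le. }
  unfold lyapunov.
  apply Rle_trans with ((x_ave N y - c) ^ 2 + K * energy N y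
    + / INR N * ((q / INR N) ^ 2 * vsum N (fun v => drift N e y v ^ 2) - K * (q * (1 - q)) * dirichlet N e y)).
  - right. field. lra.
  - assert (0 < / INR N) by (apply Rinv_0_lt_compat; lra). nra.
Qed.

Lemma E_beta_le_energy x0 t : E_beta N e q x0 t <= K * energy N x0.
Proof.
  unfold E_beta. eapply Rle_trans.
  - apply (bga_expect_le N e q HN t _ (lyapunov N K (x_ave N x0))).
    intros z. unfold lyapunov. pose proof lyapunov_weight_nonneg. pose proof (energy_nonneg N z). nra.
  - eapply Rle_trans; [apply bga_expect_superharmonic; auto; apply lyapunov_superharmonic|].
    unfold lyapunov. rewrite Rminus_diag, pow_i by lia. lra.
Qed.

End Lyapunov.

Lemma E_beta_growing N e q x0 : (0 < N)%nat -> symmetric_edges N e ->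
  Un_growing (E_beta N e q x0).
Proof.
  intros HN He t. apply bga_expect_subharmonic; auto. intros y.
  rewrite step_mean_ave_sq by auto.
  assert (0 <= (q / INR N) ^ 2 * / INR N * vsum N (fun v => drift N e y v ^ 2)).
  { apply Rmult_le_pos; [apply Rmult_le_pos; [apply pow2_ge_0|] | apply vsum_nonneg; intros; apply pow2_ge_0].
    left. apply Rinv_0_lt_compat, lt_0_INR, HN. }
  lra.
Qed.

Lemma Un_cv_le_ub u l B : (forall n, u n <= B) -> Un_cv u l -> l <= B.
Proof.
  intros Hu Hl. apply (Rle_cv_lim Hu Hl).
  intros eps Heps. exists 0%nat. intros n _. unfold Rdist. rewrite Rminus_diag, Rabs_R0. lra.
Qed.

Lemma E_beta_cv N e q L x0 : (0 < N)%nat -> symmetric_graph N e -> 0 < q < 1 ->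
  (forall v, (v < N)%nat -> 0 <= x0 v <= L) ->
  exists l, Un_cv (E_beta N e q x0) l /\
    0 <= l <= q / (1 - q) * L ^ 2 * INR (deg_max N e) / INR N.
Proof.
  intros HN Hsym Hq Hx0.
  pose proof (symmetric_graph_edges N e Hsym) as He.
  pose proof (lt_0_INR N HN) as HNr.
  set (B := q / (1 - q) * L ^ 2 * INR (deg_max N e) / INR N).
  assert (Hbound : forall t, E_beta N e q x0 t <= B).
  { intros t. eapply Rle_trans; [apply E_beta_le_energy with (dm := deg_max N e); auto|].
    { intros; now apply deg_out_le_deg_max. }
    assert (Henergy : energy N x0 <= INR N * L ^ 2).
    { rewrite <- vsum_const. apply vsum_le. intros i Hi. specialize (Hx0 i Hi). nra. }
    pose proof (pos_INR (deg_max N e)).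
    apply Rle_trans with (q * INR (deg_max N e) / ((1 - q) * INR N ^ 2) * (INR N * L ^ 2)).
    - apply Rmult_le_compat_l; auto. apply Rmult_le_pos; [nra|]. left.
      apply Rinv_0_lt_compat, Rmult_lt_0_compat; [lra | apply pow_lt; lra].
    - right. unfold B. field. lra. }
  destruct (growing_cv _ (E_beta_growing N e q x0 HN He)) as [l Hl].
  { exists B. intros r [t ->]. apply Hbound. }
  exists l. split; [exact Hl|]. split.
  - pose proof (growing_ineq _ l (E_beta_growing N e q x0 HN He) Hl 0) as H0.
    unfold E_beta in H0. simpl in H0. rewrite Rminus_diag in H0. lra.
  - exact (Un_cv_le_ub _ l B Hbound Hl).
Qed.

Lemma spectral_gap_vertices_pos N e g : is_spectral_gap N e g -> (0 < N)%nat.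
Proof. intros [[mu [[x [[v [Hv _]] _]] _]] _]. lia. Qed.

Lemma deg_max_little_o (I : nat -> Prop) (G : nat -> nat -> nat -> bool) (lam1 : nat -> R) :
  (forall N, I N -> is_spectral_gap N (G N) (lam1 N)) ->
  (forall eps, eps > 0 -> exists N0, forall N, I N -> (N0 <= N)%nat ->
     Rabs (INR (deg_max N (G N)) ^ 2 / lam1 N) <= eps * INR N) ->
  forall eps, eps > 0 -> exists N0, forall N, I N -> (N0 <= N)%nat ->
     INR (deg_max N (G N)) <= eps * INR N.
Proof.
  intros Hgap Hlittle_o eps Heps.
  destruct (Hlittle_o (eps / 2)) as [N0 HN0]; [lra|].
  exists N0. intros N HI HN.
  pose proof (deg_max_le_sq_div_gap N (G N) (lam1 N) (Hgap N HI)).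
  pose proof (Rle_abs (INR (deg_max N (G N)) ^ 2 / lam1 N)).
  specialize (HN0 N HI HN). lra.
Qed.

Theorem corollary1
  (I : nat -> Prop) (G : nat -> nat -> nat -> bool) (lam1 : nat -> R)
  (q L : R) (x0 : nat -> nat -> R)
  (Hsym : forall N, I N -> symmetric_graph N (G N))
  (Hconn : forall N, I N -> connected_graph N (G N))
  (Hgap : forall N, I N -> is_spectral_gap N (G N) (lam1 N))
  (Hq : 0 < q < 1)
  (Hx0 : forall N, I N -> forall v, (v < N)%nat -> 0 <= x0 N v <= L)
  (Hlittle_o : forall eps, eps > 0 -> exists N0, forall N, I N -> (N0 <= N)%nat ->
       Rabs ((INR (deg_max N (G N))) ^ 2 / lam1 N) <= eps * INR N) :
  exists Einf : nat -> R,
    (forall N, I N -> Un_cv (fun t => E_beta N (G N) q (x0 N) t) (Einf N)) /\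
    (forall eps, eps > 0 -> exists N0, forall N, I N -> (N0 <= N)%nat -> Rabs (Einf N) < eps).
Proof.
  set (C := q / (1 - q) * L ^ 2).
  assert (Hlim : forall N, exists l, I N -> Un_cv (E_beta N (G N) q (x0 N)) l /\
                   0 <= l <= C * INR (deg_max N (G N)) / INR N).
  { intros N. destruct (classic (I N)) as [HI|HI]; [|exists 0; tauto].
    destruct (E_beta_cv N (G N) q L (x0 N)) as [l Hl]; eauto using spectral_gap_vertices_pos. }
  destruct (choice _ Hlim) as [Einf HEinf].
  exists Einf. split; [intros N HI; apply HEinf, HI|].
  intros eps Heps.
  assert (HC : 0 <= C) by (unfold C; apply Rmult_le_pos; [apply Rlt_le, Rdiv_lt_0_compat|apply pow2_ge_0]; lra).
  destruct (deg_max_little_o I G lam1 Hgap Hlittle_o (eps / (C + 1))) as [N0 HN0].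
  { apply Rdiv_lt_0_compat; lra. }
  exists N0. intros N HI HN.
  destruct (HEinf N HI) as [_ [Hl0 HlB]].
  pose proof (lt_0_INR N (spectral_gap_vertices_pos _ _ _ (Hgap N HI))).
  specialize (HN0 N HI HN).
  rewrite Rabs_pos_eq by lra.
  assert (C * INR (deg_max N (G N)) / INR N <= C * (eps / (C + 1))).
  { unfold Rdiv at 1. rewrite Rmult_assoc. apply Rmult_le_compat_l; auto.
    apply Rmult_le_reg_r with (INR N); auto. rewrite Rmult_assoc, Rinv_l; lra. }
  assert (C * (eps / (C + 1)) < eps).
  { apply Rmult_lt_reg_r with (C + 1); [lra|]. field_simplify; lra. }
  lra.
Qed.
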